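(* Consider $N=Ln$ units in $L$ strata of equal size $n$, stratum $l$ containing $n_{l(1)}$ treated and $n_{l(0)}$ control units, with $n_1=\sum_l n_{l(1)}>0$, $n_0=\sum_l n_{l(0)}>0$ and $\sum_l n_{l(0)}n_{l(1)}>0$. Let $\sigma_0^2>0$ and $\boldsymbol\Sigma=\boldsymbol I_L\otimes\boldsymbol J_n+\sigma_0^2\boldsymbol I_N$ (units ordered by stratum, $\boldsymbol J_n$ the $n\times n$ all-ones matrix). Let $(\hat\mu,\hat\tau)'=\big[X'\boldsymbol\Sigma^{-1}X\big]^{-1}X'\boldsymbol\Sigma^{-1}\boldsymbol Y$ with $X=(\boldsymbol 1_N,\boldsymbol A)$. Then $\hat\tau=\lambda\hat\tau_1+(1-\lambda)\hat\tau_0$, where $$\hat\tau_0=\bar Y_1-\bar Y_0,\qquad \hat\tau_1=\frac{\sum_l n_{l(0)}n_{l(1)}(\bar Y_{l(1)}-\bar Y_{l(0)})}{\sum_l n_{l(0)}n_{l(1)}},\qquad \lambda=\frac{N\sum_l n_{l(0)}n_{l(1)}}{n_1n_0\sigma_0^2+N\sum_l n_{l(0)}n_{l(1)}},$$ $\bar Y_1,\bar Y_0$ being the overall treated and control sample means and $\bar Y_{l(a)}$ the mean outcome of group $a$ within stratum $l$. In particular $\lambda\to1$ (so $\hat\tau\to\hat\tau_1$) as $\sigma_0^2\to0$, and $\lambda$ is decreasing in $\sigma_0^2$.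
   Context: $\boldsymbol Y$ is the vector of observed outcomes and $\boldsymbol A$ the vector of binary treatment indicators. This is the generalized least squares estimate of $\tau$ in the nonparametric GP model $\boldsymbol Y\sim MVN(\mu\boldsymbol 1+\tau\boldsymbol A,\boldsymbol\Sigma)$ whose GP covariance encodes the known stratum structure ($k_{ij}=1$ within a stratum, $0$ otherwise). *)

From HB Require Import structures.
From mathcomp Require Import all_boot all_order all_algebra.
Set Implicit Arguments. Unset Strict Implicit. Unset Printing Implicit Defensive.
Import Order.TTheory GRing.Theory Num.Theory.
Local Open Scope ring_scope.

(* Units are indexed by i : 'I_(L*n), ordered by stratum: unit i lies in
   stratum (i %/ n).  A i = true iff unit i is treated. *)

Definition Sigma (R : realFieldType) (L n : nat) (s2 : R) : 'M[R]_(L * n) :=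
  \matrix_(i, j) (((i %/ n)%N == (j %/ n)%N)%:R + s2 * (i == j)%:R).

Definition design (R : realFieldType) (N : nat) (A : 'I_N -> bool) : 'M[R]_(N, 2) :=
  \matrix_(i, j) (if j == 0 :> 'I_2 then 1 else (A i)%:R).

Definition gls (R : realFieldType) (N : nat) (S : 'M[R]_N) (X : 'M[R]_(N, 2))
  (Y : 'cV[R]_N) : 'cV[R]_2 :=
  invmx (X^T *m invmx S *m X) *m (X^T *m invmx S *m Y).

Definition tau_hat (R : realFieldType) (L n : nat) (s2 : R)
  (A : 'I_(L * n) -> bool) (Y : 'cV[R]_(L * n)) : R :=
  gls (Sigma L n s2) (design R A) Y (@Ordinal 2 1 isT) 0.

Definition nla (L n : nat) (A : 'I_(L * n) -> bool) (l : nat) (a : bool) : nat :=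
  #|[set i : 'I_(L * n) | ((i %/ n)%N == l) && (A i == a)]|.

Definition na (N : nat) (A : 'I_N -> bool) (a : bool) : nat :=
  #|[set i : 'I_N | A i == a]|.

Definition Ybar_la (R : realFieldType) (L n : nat) (A : 'I_(L * n) -> bool)
  (Y : 'cV[R]_(L * n)) (l : nat) (a : bool) : R :=
  (\sum_(i : 'I_(L * n) | ((i %/ n)%N == l) && (A i == a)) Y i 0) / (nla A l a)%:R.

Definition Ybar_a (R : realFieldType) (N : nat) (A : 'I_N -> bool)
  (Y : 'cV[R]_N) (a : bool) : R :=
  (\sum_(i : 'I_N | A i == a) Y i 0) / (na A a)%:R.

Definition Sprod (L n : nat) (A : 'I_(L * n) -> bool) : nat :=
  \sum_(l < L) nla A l false * nla A l true.

Definition tau0_hat (R : realFieldType) (N : nat) (A : 'I_N -> bool)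
  (Y : 'cV[R]_N) : R := Ybar_a A Y true - Ybar_a A Y false.

Definition tau1_hat (R : realFieldType) (L n : nat) (A : 'I_(L * n) -> bool)
  (Y : 'cV[R]_(L * n)) : R :=
  (\sum_(l < L) ((nla A l false * nla A l true)%:R *
      (Ybar_la A Y l true - Ybar_la A Y l false))) / (Sprod A)%:R.

Definition lambda (R : realFieldType) (L n : nat) (A : 'I_(L * n) -> bool) (s2 : R) : R :=
  ((L * n)%:R * (Sprod A)%:R) /
  ((na A true)%:R * (na A false)%:R * s2 + (L * n)%:R * (Sprod A)%:R).

(* Write N = L n and J for the N x N "same stratum" matrix, so that
   Sigma = J + s2 I.  Since J^2 = n J, Sigma is inverted in closed form,
   Sigma^-1 = s2^-1 (I - c J) with c = 1 / (n + s2), and every entry of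
   X' Sigma^-1 Z becomes  s2^-1 (sum_i X_i Z_i - c sum_l X_(l) Z_(l)),  where
   X_(l) denotes a stratum total.  For the design X = (1, A) the two rows
   collapse to
     row mu  :  c * sum_i Z_i,
     row tau :  c * (sum_i A_i Z_i + s2^-1 * C(Z)),
   where C(Z) = sum_l (n_l0 * treated total of Z - n_l1 * control total of Z)
   is the within-stratum contrast.  C vanishes on 1, equals sum_l n_l0 n_l1 on
   A and the numerator of tau1_hat on Y, so the Gram matrix and the moment
   vector are explicit, and Cramer's rule for the 2 x 2 system gives
   tau_hat = lambda tau1_hat + (1 - lambda) tau0_hat.  Finally
   lambda(s2) = a / (b s2 + a) with a, b > 0, whose behaviour as s2 -> 0 and
   monotonicity are elementary. *)

From HB Require Import structures.
From mathcomp Require Import all_boot all_order all_algebra.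
From mathcomp Require Import ring lra.
Set Implicit Arguments. Unset Strict Implicit. Unset Printing Implicit Defensive.
Import Order.TTheory GRing.Theory Num.Theory.
Local Open Scope ring_scope.

Lemma invmx_right (R : comUnitRingType) (m : nat) (A B : 'M[R]_m) :
  A *m B = 1%:M -> invmx A = B.
Proof.
move=> AB; have [uA _] := mulmx1_unit AB.
by rewrite -[invmx A]mulmx1 -AB mulmxA mulVmx // mul1mx.
Qed.

Definition mu_ix : 'I_2 := @Ordinal 2 0 isT.
Definition tau_ix : 'I_2 := @Ordinal 2 1 isT.

Lemma ord2_ind (P : 'I_2 -> Prop) : P mu_ix -> P tau_ix -> forall i, P i.
Proof. by move=> P0 P1 [[|[|k]] lt_k2] //; [move: P0 | move: P1]; congr P; apply: val_inj. Qed.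

Lemma sum_ord2 (R : zmodType) (f : 'I_2 -> R) : \sum_(k < 2) f k = f mu_ix + f tau_ix.
Proof. by rewrite big_ord_recr big_ord1; congr (f _ + f _); apply: val_inj. Qed.

Lemma solve2_tau (F : fieldType) (M : 'M[F]_2) (b : 'cV[F]_2) :
  let d := M mu_ix mu_ix * M tau_ix tau_ix - M mu_ix tau_ix * M tau_ix mu_ix in
  d != 0 ->
  (invmx M *m b) tau_ix 0 = (M mu_ix mu_ix * b tau_ix 0 - M tau_ix mu_ix * b mu_ix 0) / d.
Proof.
move=> d d_neq0.
pose W : 'M[F]_2 := d^-1 *: \matrix_(i, j)
  (if i == mu_ix then (if j == mu_ix then M tau_ix tau_ix else - M mu_ix tau_ix)
   else (if j == mu_ix then - M tau_ix mu_ix else M mu_ix mu_ix)).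
have MW : M *m W = 1%:M.
  by apply/matrixP; apply: ord2_ind; apply: ord2_ind; rewrite !mxE sum_ord2 !mxE /= /d; field.
by rewrite (invmx_right MW) !mxE sum_ord2 !mxE /=; field.
Qed.

Section Strata.
Variables (R : comPzRingType) (L n : nat).
Local Notation N := (L * n)%N.

Definition stratum_sum (u : 'I_N -> R) (l : nat) : R :=
  \sum_(i : 'I_N | (i %/ n)%N == l) u i.

Lemma stratum_sum_ext (u v : 'I_N -> R) (l : nat) :
  u =1 v -> stratum_sum u l = stratum_sum v l.
Proof. by move=> uv; apply: eq_bigr => i _. Qed.

Lemma stratum_lt (i : 'I_N) : (i %/ n < L)%N.
Proof.
case: n i => [|n'] i; first by case: i; rewrite muln0.
by rewrite ltn_divLR.
Qed.

Lemma sum_by_stratum (u : 'I_N -> R) : \sum_i u i = \sum_(l < L) stratum_sum u l.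
Proof. exact: (partition_big (fun i => Ordinal (stratum_lt i)) xpredT). Qed.

Lemma stratum_size (l : nat) : (l < L)%N -> stratum_sum (fun=> 1) l = n%:R.
Proof.
move=> lL; rewrite /stratum_sum; case: n => [|n'].
  by rewrite big_pred0 // => -[]; rewrite muln0.
have stratumE i : ((i %/ n'.+1)%N == l) = (l * n'.+1 <= i < l.+1 * n'.+1)%N.
  by rewrite eqn_leq leq_divRL // -ltnS ltn_divLR // andbC.
rewrite -(big_mkord (fun i => (i %/ n'.+1)%N == l) (fun=> 1)).
rewrite (eq_bigl _ _ stratumE) -big_nat_widen ?leq_mul2r ?lL ?orbT //.
by rewrite -(@big_nat_widenl _ _ _ _ 0 _ xpredT) // sumr_const_nat mulSn addnK.
Qed.

Definition strataJ : 'M[R]_N := \matrix_(i, j) (((i %/ n)%N == (j %/ n)%N)%:R).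

Lemma strataJ_mul (k : nat) (Z : 'M[R]_(N, k)) (i : 'I_N) (b : 'I_k) :
  (strataJ *m Z) i b = stratum_sum (fun j => Z j b) (i %/ n).
Proof.
rewrite mxE /stratum_sum [RHS]big_mkcond; apply: eq_bigr => j _; rewrite mxE eq_sym.
by case: eqP; rewrite ?mul1r ?mul0r.
Qed.

(* J^2 = n J, the identity behind the closed-form inverse of Sigma. *)
Lemma strataJ_sq : strataJ *m strataJ = n%:R *: strataJ.
Proof.
apply/matrixP => i k; rewrite strataJ_mul !mxE -(stratum_size (stratum_lt i)).
rewrite /stratum_sum mulr_suml; apply: eq_bigr => j /eqP <-.
by rewrite mxE mul1r.
Qed.

Lemma strataJ_form (k1 k2 : nat) (X : 'M[R]_(N, k1)) (Z : 'M[R]_(N, k2)) a b :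
  (X^T *m strataJ *m Z) a b =
  \sum_(l < L) stratum_sum (fun i => X i a) l * stratum_sum (fun i => Z i b) l.
Proof.
rewrite -mulmxA mxE.
under eq_bigr => i _ do rewrite mxE strataJ_mul.
rewrite sum_by_stratum; apply: eq_bigr => l _.
by rewrite /stratum_sum mulr_suml; apply: eq_bigr => i /eqP ->.
Qed.
End Strata.

Section Covariance.
Variables (R : realFieldType) (L n : nat) (s2 : R).
Hypothesis s2_gt0 : 0 < s2.
Local Notation N := (L * n)%N.
Local Notation J := (strataJ R L n).

Lemma SigmaE : Sigma L n s2 = J + s2%:M.
Proof. by apply/matrixP => i j; rewrite !mxE mulr_natr. Qed.

Lemma Sigma_inv :
  invmx (Sigma L n s2) = s2^-1 *: (1%:M - (n%:R + s2)^-1 *: J).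
Proof.
have s2_neq0 : s2 != 0 by rewrite gt_eqF.
have ns2_neq0 : n%:R + s2 != 0 by rewrite gt_eqF // ltr_wpDl.
apply: invmx_right; rewrite SigmaE -scalemxAr mulmxDl mulmxBr mulmx1 -scalemxAr strataJ_sq.
rewrite mul_scalar_mx; apply/matrixP => i j; rewrite !mxE.
by field; apply/andP.
Qed.

Lemma gls_form (k1 k2 : nat) (X : 'M[R]_(N, k1)) (Z : 'M[R]_(N, k2)) a b :
  (X^T *m invmx (Sigma L n s2) *m Z) a b =
  s2^-1 * (\sum_i X i a * Z i b - (n%:R + s2)^-1 *
     \sum_(l < L) stratum_sum (fun i => X i a) l * stratum_sum (fun i => Z i b) l).
Proof.
rewrite Sigma_inv -scalemxAr -scalemxAl mulmxBr mulmx1 -scalemxAr mulmxBl -scalemxAl.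
rewrite -strataJ_form !mxE; congr (_ * (_ - _)).
by apply: eq_bigr => i _; rewrite mxE.
Qed.
End Covariance.

Section Indicators.
Variable R : realFieldType.

Lemma sum_indicator (T : finType) (P : pred T) (b : T -> bool) (u : T -> R) :
  \sum_(i | P i) (b i)%:R * u i = \sum_(i | P i && b i) u i.
Proof. by rewrite big_mkcondr; apply: eq_bigr => i _; case: (b i); rewrite ?mul1r ?mul0r. Qed.

Lemma sum_count (T : finType) (P : pred T) : \sum_(i | P i) (1 : R) = #|[set i | P i]|%:R.
Proof. by rewrite sumr_const cardsE. Qed.

(* The identity also holds for an empty group, where both sides vanish. *)
Lemma count_mul_mean (T : finType) (P : pred T) (u : T -> R) :
  #|[set i | P i]|%:R * ((\sum_(i | P i) u i) / #|[set i | P i]|%:R) = \sum_(i | P i) u i.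
Proof.
have [c0|c_gt0] := posnP #|[set i | P i]|; last by rewrite mulrC divfK // pnatr_eq0 -lt0n.
rewrite c0 mul0r big_pred0 // => i.
by have := card0_eq c0 i; rewrite in_set.
Qed.
End Indicators.

Section Design.
Variables (R : realFieldType) (L n : nat) (A : 'I_(L * n) -> bool).
Local Notation N := (L * n)%N.
Local Notation X := (design R A).
Local Notation nl l a := ((nla A l a)%:R : R).

Lemma design_mu (i : 'I_N) : X i mu_ix = 1.
Proof. by rewrite mxE. Qed.

Lemma design_tau (i : 'I_N) : X i tau_ix = (A i == true)%:R.
Proof. by rewrite mxE eqb_id. Qed.

Lemma split_by_group (u : 'I_N -> R) (i : 'I_N) :
  u i = (A i == true)%:R * u i + (A i == false)%:R * u i.
Proof. by case: (A i); rewrite ?mul1r ?mul0r ?addr0 ?add0r. Qed.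

Lemma stratum_sum_group (u : 'I_N -> R) (a : bool) (l : nat) :
  stratum_sum (fun i => (A i == a)%:R * u i) l =
  \sum_(i : 'I_N | ((i %/ n)%N == l) && (A i == a)) u i.
Proof. by rewrite /stratum_sum sum_indicator. Qed.

Lemma stratum_sum_split (u : 'I_N -> R) (l : nat) :
  stratum_sum u l = stratum_sum (fun i => (A i == true)%:R * u i) l
                    + stratum_sum (fun i => (A i == false)%:R * u i) l.
Proof. by rewrite /stratum_sum -big_split; apply: eq_bigr => i _; apply: split_by_group. Qed.

Lemma stratum_count (a : bool) (l : nat) :
  stratum_sum (fun i => (A i == a)%:R) l = nl l a.
Proof.
by rewrite -(stratum_sum_ext l (fun i => mulr1 (A i == a)%:R)) stratum_sum_group sum_count.
Qed.

Lemma stratum_total (l : nat) : (l < L)%N -> n%:R = nl l true + nl l false.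
Proof.
move=> lL; rewrite -(stratum_size R n lL) -!stratum_count /stratum_sum -big_split.
by apply: eq_bigr => i _; case: (A i) => /=; rewrite ?addr0 ?add0r.
Qed.

Lemma group_count (a : bool) : \sum_i (A i == a)%:R = (na A a)%:R :> R.
Proof. by rewrite -(eq_bigr _ (fun i _ => mulr1 (A i == a)%:R)) sum_indicator sum_count. Qed.

Lemma group_total : N%:R = (na A true)%:R + (na A false)%:R :> R.
Proof.
rewrite -!group_count -big_split -[N in N%:R]card_ord -sumr_const.
by apply: eq_bigr => i _; case: (A i) => /=; rewrite ?addr0 ?add0r.
Qed.

Definition within_contrast (u : 'I_N -> R) : R :=
  \sum_(l < L) (nl l false * stratum_sum (fun i => (A i == true)%:R * u i) l
               - nl l true * stratum_sum (fun i => (A i == false)%:R * u i) l).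

Lemma within_contrast_ext (u v : 'I_N -> R) : u =1 v -> within_contrast u = within_contrast v.
Proof.
move=> uv; apply: eq_bigr => l _.
by congr (_ * _ - _ * _); apply: eq_bigr => i _; rewrite uv.
Qed.

Lemma gls_row_mu (s2 : R) (k : nat) (Z : 'M[R]_(N, k)) (b : 'I_k) : 0 < s2 ->
  (X^T *m invmx (Sigma L n s2) *m Z) mu_ix b = (n%:R + s2)^-1 * \sum_i Z i b.
Proof.
move=> s2_gt0; have ns2_neq0 : n%:R + s2 != 0 by rewrite gt_eqF // ltr_wpDl.
rewrite gls_form //.
under eq_bigr => i _ do rewrite design_mu mul1r.
rewrite (eq_bigr (fun l : 'I_L => n%:R * stratum_sum (fun i => Z i b) l)); last first.
  by move=> l _; rewrite (stratum_sum_ext l design_mu) stratum_size.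
rewrite -mulr_sumr -sum_by_stratum.
by field; rewrite ns2_neq0 gt_eqF.
Qed.

(* Row tau of X' Sigma^-1 Z: the treated total plus s2^-1 times the contrast.  Per
   stratum this is the identity  s2^-1 (a - c m (a + b)) = c (a + s2^-1 (k a - m b))
   for n = m + k. *)
Lemma gls_row_tau (s2 : R) (k : nat) (Z : 'M[R]_(N, k)) (b : 'I_k) : 0 < s2 ->
  (X^T *m invmx (Sigma L n s2) *m Z) tau_ix b =
  (n%:R + s2)^-1 * (\sum_i (A i == true)%:R * Z i b
                    + s2^-1 * within_contrast (fun i => Z i b)).
Proof.
move=> s2_gt0; have ns2_neq0 : n%:R + s2 != 0 by rewrite gt_eqF // ltr_wpDl.
rewrite gls_form //.
under eq_bigr => i _ do rewrite design_tau.
rewrite sum_by_stratum.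
have cross : \sum_(l < L) stratum_sum (fun i => X i tau_ix) l * stratum_sum (fun i => Z i b) l
    = \sum_(l < L) nl l true * (stratum_sum (fun i => (A i == true)%:R * Z i b) l
                                + stratum_sum (fun i => (A i == false)%:R * Z i b) l).
  apply: eq_bigr => l _.
  by rewrite (stratum_sum_ext l design_tau) stratum_count -stratum_sum_split.
rewrite cross /within_contrast mulr_sumr -sumrB mulr_sumr [in RHS]mulr_sumr -big_split.
rewrite [in RHS]mulr_sumr; apply: eq_bigr => l _ /=.
rewrite (stratum_total (ltn_ord l)) in ns2_neq0 *.
by field; rewrite ns2_neq0 gt_eqF.
Qed.

Lemma contrast_const : within_contrast (fun=> 1) = 0.
Proof.
apply: big1 => l _.
rewrite !(stratum_sum_ext l (fun i => mulr1 (A i == _)%:R)) !stratum_count.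
by rewrite mulrC subrr.
Qed.

Lemma treated_sq (i : 'I_N) : (A i == true)%:R * (A i == true)%:R = (A i == true)%:R :> R.
Proof. by case: (A i); rewrite ?mulr1 ?mulr0. Qed.

Lemma control_treated (i : 'I_N) : (A i == false)%:R * (A i == true)%:R = 0 :> R.
Proof. by case: (A i); rewrite ?mulr1 ?mulr0. Qed.

Lemma contrast_treated : within_contrast (fun i => (A i == true)%:R) = (Sprod A)%:R.
Proof.
rewrite /Sprod natr_sum; apply: eq_bigr => l _.
rewrite (stratum_sum_ext l treated_sq) (stratum_sum_ext l control_treated) stratum_count.
by rewrite /stratum_sum big1 // mulr0 subr0 natrM.
Qed.

Lemma stratum_group_mean (Y : 'cV[R]_N) (a : bool) (l : nat) :
  stratum_sum (fun i => (A i == a)%:R * Y i 0) l = nl l a * Ybar_la A Y l a.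
Proof.
by rewrite stratum_sum_group /Ybar_la /nla
  (count_mul_mean (fun i : 'I_N => ((i %/ n)%N == l) && (A i == a))).
Qed.

Lemma group_mean (Y : 'cV[R]_N) (a : bool) :
  \sum_i (A i == a)%:R * Y i 0 = (na A a)%:R * Ybar_a A Y a.
Proof.
by rewrite sum_indicator /Ybar_a /na (count_mul_mean (fun i : 'I_N => A i == a)).
Qed.

Lemma contrast_outcome (Y : 'cV[R]_N) :
  within_contrast (fun i => Y i 0) = \sum_(l < L) ((nla A l false * nla A l true)%:R *
      (Ybar_la A Y l true - Ybar_la A Y l false)).
Proof.
apply: eq_bigr => l _; rewrite !stratum_group_mean natrM.
by ring.
Qed.

(* The decomposition: with G = X' Sigma^-1 X = c [[N, n1], [n1, n1 + P / s2]] and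
   X' Sigma^-1 Y = c [S, S1 + P tau1 / s2], Cramer's rule gives
   tau_hat = (n1 n0 s2 tau0 + N P tau1) / (n1 n0 s2 + N P). *)
Lemma tau_hat_shrinkage (s2 : R) (Y : 'cV[R]_N) :
  (0 < na A true)%N -> (0 < na A false)%N -> (0 < Sprod A)%N -> 0 < s2 ->
  tau_hat s2 A Y = lambda A s2 * tau1_hat A Y + (1 - lambda A s2) * tau0_hat A Y.
Proof.
move=> n1_gt0 n0_gt0 P_gt0 s2_gt0.
set c := (n%:R + s2)^-1; set n1 : R := (na A true)%:R; set n0 : R := (na A false)%:R.
set P : R := (Sprod A)%:R.
set G := X^T *m invmx (Sigma L n s2) *m X.
set B := X^T *m invmx (Sigma L n s2) *m Y.
have G00 : G mu_ix mu_ix = c * N%:R.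
  by rewrite gls_row_mu // (eq_bigr _ (fun i _ => design_mu i)) sumr_const card_ord.
have G01 : G mu_ix tau_ix = c * n1.
  by rewrite gls_row_mu // (eq_bigr _ (fun i _ => design_tau i)) group_count.
have G10 : G tau_ix mu_ix = c * n1.
  rewrite gls_row_tau // (within_contrast_ext design_mu) contrast_const mulr0 addr0.
  by under eq_bigr => i _ do rewrite design_mu mulr1; rewrite group_count.
have G11 : G tau_ix tau_ix = c * (n1 + s2^-1 * P).
  rewrite gls_row_tau // (within_contrast_ext design_tau) contrast_treated.
  by under eq_bigr => i _ do rewrite design_tau treated_sq; rewrite group_count.
have B0 : B mu_ix 0 = c * (n1 * Ybar_a A Y true + n0 * Ybar_a A Y false).
  rewrite gls_row_mu // (eq_bigr _ (fun i _ => split_by_group (fun j => Y j 0) i)).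
  by rewrite big_split /= !group_mean.
have B1 : B tau_ix 0 = c * (n1 * Ybar_a A Y true + s2^-1 * (P * tau1_hat A Y)).
  rewrite gls_row_tau // contrast_outcome group_mean /tau1_hat [P * _]mulrC.
  by rewrite divfK // pnatr_eq0 -lt0n.
have n1_pos : 0 < n1 by rewrite ltr0n.
have n0_pos : 0 < n0 by rewrite ltr0n.
have P_pos : 0 < P by rewrite ltr0n.
have c_pos : 0 < c by rewrite invr_gt0 ltr_wpDl.
have det_pos : 0 < n1 * n0 * s2 + N%:R * P.
  by rewrite group_total addr_gt0 // ?mulr_gt0 // addr_gt0.
have det_factor : c * (n1 + n0) * (c * (n1 + s2^-1 * P)) - c * n1 * (c * n1)
                  = c ^+ 2 / s2 * (n1 * n0 * s2 + (n1 + n0) * P).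
  by field; rewrite gt_eqF.
rewrite /tau_hat /gls -/G -/B -[@Ordinal 2 1 isT]/tau_ix solve2_tau;
  rewrite ?B1 ?B0 G00 G01 G10 G11 /lambda /tau0_hat group_total -/n1 -/n0 -/P det_factor
    in det_pos *.
- by field; rewrite (gt_eqF c_pos) (gt_eqF s2_gt0) (gt_eqF det_pos).
- by rewrite gt_eqF // mulr_gt0 // divr_gt0 // exprn_gt0.
Qed.
End Design.

Section ShrinkageWeight.
Variables (R : realFieldType) (a b : R).
Hypotheses (a_gt0 : 0 < a) (b_gt0 : 0 < b).

Lemma weight_denom_gt0 (s : R) : 0 < s -> 0 < b * s + a.
Proof. by move=> s_gt0; rewrite addr_gt0 // mulr_gt0. Qed.

Lemma weight_near_one (e : R) : 0 < e ->
  exists2 d : R, 0 < d & forall s : R, 0 < s -> s < d -> `|a / (b * s + a) - 1| < e.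
Proof.
move=> e_gt0; exists (e * a / b); first by rewrite divr_gt0 // mulr_gt0.
move=> s s_gt0 s_lt; have D_gt0 := weight_denom_gt0 s_gt0.
have -> : a / (b * s + a) - 1 = - (b * s / (b * s + a)) by field; rewrite gt_eqF.
rewrite normrN ger0_norm ?divr_ge0 ?ltW ?mulr_gt0 // ltr_pdivrMr //.
by move: s_lt; rewrite ltr_pdivlMr // => s_lt; nra.
Qed.

Lemma weight_decreasing (s s' : R) : 0 < s -> s < s' -> a / (b * s' + a) < a / (b * s + a).
Proof.
move=> s_gt0 s_lt; have D_gt0 := weight_denom_gt0 s_gt0.
have D'_gt0 := weight_denom_gt0 (lt_trans s_gt0 s_lt).
rewrite ltr_pdivrMr // mulrAC ltr_pdivlMr //.
by rewrite ltr_pM2l // ltrD2r ltr_pM2l.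
Qed.
End ShrinkageWeight.

(* lambda A s2 is a / (b s2 + a) with a = N sum_l n_l0 n_l1 and b = n1 n0. *)
Theorem mainTheorem5 (R : realFieldType) (L n : nat) (A : 'I_(L * n) -> bool)
  (hn1 : (0 < na A true)%N) (hn0 : (0 < na A false)%N) (hS : (0 < Sprod A)%N) :
  (forall (s2 : R) (Y : 'cV[R]_(L * n)), 0 < s2 ->
     tau_hat s2 A Y = lambda A s2 * tau1_hat A Y + (1 - lambda A s2) * tau0_hat A Y)
  /\ (forall e : R, 0 < e -> exists2 d : R, 0 < d &
        forall s2 : R, 0 < s2 -> s2 < d -> `|lambda A s2 - 1| < e)
  /\ (forall s s' : R, 0 < s -> s < s' -> lambda A s' < lambda A s).
Proof.
have a_gt0 : 0 < (L * n)%:R * (Sprod A)%:R :> R.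
  by rewrite (group_total R A) mulr_gt0 ?addr_gt0 ?ltr0n.
have b_gt0 : 0 < (na A true)%:R * (na A false)%:R :> R by rewrite mulr_gt0 ?ltr0n.
split; [|split].
- by move=> s2 Y; exact: tau_hat_shrinkage.
- exact: weight_near_one.
- exact: weight_decreasing.
Qed.
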